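(* Let $A,B:(0,\infty)\to(0,\infty)$ be the functions $A=\tfrac r3\sqrt{1-r^{-3}}$, $B=\tfrac r{\sqrt3}$, where $r=r(t)\in(1,\infty)$ is determined by $\dot A=\tfrac12(1-A^2/B^2)$, $\dot B=A/B$ with $r\to1$ as $t\to0$. For the ODE system $$\dot f_+=\frac{f_+}{A}\Bigl(1-\frac{A^2}{B^2}-f_+\Bigr)+f_-^2\frac{A}{B^2},\qquad \dot f_-=\frac{2f_-}{A}(f_+-1),$$ the following subsets of $\mathbb{R}^2$ are forward-invariant (for $t>0$): (i) $H_\pm=\{(f_+,f_-):\pm f_->0\}$; (ii) $\mathcal{R}_\infty=\{(f_+,f_-): f_+>1,\ f_->1\}$; (iii) $\mathcal{R}_0=\{(f_+,f_-):\tfrac23<f_+<1,\ 0<f_-<1\}$.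
   Context: $A$ and $B$ are the metric coefficients of the Bryant–Salamon $G_2$-metric $dt^2+A^2\sum(e_i^+)^2+B^2\sum(e_i^-)^2$ on $\mathbf{S}(S^3)$, and the system is the $\mathrm{SU}(2)^3$-invariant $G_2$-instanton equation for $\mathrm{SU}(2)$-connections $f_+\sum_iE_i\otimes e_i^++f_-\sum_iE_i\otimes e_i^-$. *)

From Stdlib Require Import Reals.
From Coquelicot Require Import Coquelicot.
Open Scope R_scope.

Definition coefA (r : R -> R) (t : R) : R := r t / 3 * sqrt (1 - / (r t ^ 3)).
Definition coefB (r : R -> R) (t : R) : R := r t / sqrt 3.

Definition rhs_plus (r : R -> R) (t fp fm : R) : R :=
  fp / coefA r t * (1 - coefA r t ^ 2 / coefB r t ^ 2 - fp)
  + fm ^ 2 * (coefA r t / coefB r t ^ 2).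
Definition rhs_minus (r : R -> R) (t fp fm : R) : R :=
  2 * fm / coefA r t * (fp - 1).

Definition is_solution_on (r : R -> R) (fp fm : R -> R) (t0 t1 : R) : Prop :=
  forall t, t0 <= t <= t1 ->
    is_derive fp t (rhs_plus r t (fp t) (fm t)) /\
    is_derive fm t (rhs_minus r t (fp t) (fm t)).

Definition fwd_invariant (r : R -> R) (S : R -> R -> Prop) : Prop :=
  forall (fp fm : R -> R) (t0 t1 : R),
    0 < t0 -> t0 <= t1 ->
    is_solution_on r fp fm t0 t1 ->
    S (fp t0) (fm t0) -> S (fp t1) (fm t1).

Definition H_plus (x y : R) : Prop := 0 < y.
Definition H_minus (x y : R) : Prop := y < 0.
Definition R_infty (x y : R) : Prop := 1 < x /\ 1 < y.
Definition R_zero (x y : R) : Prop := 2 / 3 < x < 1 /\ 0 < y < 1.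

From Stdlib Require Import Reals Lra Psatz Classical.
From Coquelicot Require Import Coquelicot.
Open Scope R_scope.

(* The equation for f_- is linear, f_-' = c f_- with c = 2 (f_+ - 1) / A, so
   f_-(t) = f_-(t0) exp (int_t0^t c): f_- keeps its sign, and |f_-| does not
   decrease while f_+ >= 1 and does not increase while f_+ <= 1.  On the line
   f_+ = 1 the equation for f_+ reads f_+' = (f_-^2 - 1) A / B^2, and on
   f_+ = 2/3 its right hand side is positive because A^2 / B^2 = (1 - r^-3) / 3
   < 1/3.  So as long as f_- stays on the correct side of 1, f_+ cannot cross
   the boundary lines of R_infty and R_0; a first exit time (real induction)
   argument combines the two observations. *)

Lemma real_induction (Q : R -> Prop) (a b : R) :
  a <= b -> Q a ->
  (forall t, a <= t < b -> Q t -> locally t Q) ->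
  (forall s, a < s <= b -> (forall u, a <= u < s -> Q u) -> Q s) ->
  Q b.
Proof.
  intros Hab Qa Hopen Hclosed.
  set (E := fun x => a <= x <= b /\ forall u, a <= u < x -> Q u).
  assert (Ea : E a) by (split; [lra | intros u Hu; lra]).
  destruct (completeness E) as [s [Hub Hlub]].
  { exists b; intros x Ex; apply Ex. }
  { exists a; exact Ea. }
  assert (Has : a <= s) by (apply Hub, Ea).
  assert (Hsb : s <= b) by (apply Hlub; intros x Ex; apply Ex).
  assert (Hbelow : forall u, a <= u < s -> Q u).
  { intros u Hu. apply NNPP; intro Hnot.
    assert (s <= u); [|lra].
    apply Hlub; intros x [_ Hx].
    apply Rnot_lt_le; intro Hux. apply Hnot, Hx; lra. }
  assert (Qs : Q s).
  { destruct (Req_dec s a) as [->|Hne]; [exact Qa|].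
    apply Hclosed; [lra | exact Hbelow]. }
  destruct (Req_dec s b) as [<-|Hne]; [exact Qs|].
  destruct (Hopen s ltac:(lra) Qs) as [eps Heps].
  set (x := Rmin (s + eps / 2) b).
  assert (Hx : s < x <= s + eps / 2).
  { pose proof (cond_pos eps). split; [apply Rmin_glb_lt; lra | apply Rmin_l]. }
  assert (Hxb : x <= b) by apply Rmin_r.
  assert (Ex : E x).
  { unfold E; split; [lra|].
    intros u Hu.
    destruct (Rlt_or_le u s) as [Hus|Hsu]; [apply Hbelow; lra|].
    apply Heps. unfold ball; simpl; unfold AbsRing_ball, abs, minus, plus, opp; simpl.
    pose proof (cond_pos eps). rewrite Rabs_pos_eq; lra. }
  pose proof (Hub x Ex). lra.
Qed.

Lemma is_derive_continuous (f : R -> R) (t l : R) : is_derive f t l -> continuous f t.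
Proof.
  intros Hd. apply (ex_derive_continuous (K := R_AbsRing) (V := R_NormedModule) f).
  exists l; exact Hd.
Qed.

Lemma locally_gt_of_continuous (f : R -> R) (t c : R) :
  continuous f t -> c < f t -> locally t (fun u => c < f u).
Proof. intros Hf Hc. exact (Hf _ (open_gt c (f t) Hc)). Qed.

Lemma locally_lt_of_continuous (f : R -> R) (t c : R) :
  continuous f t -> f t < c -> locally t (fun u => f u < c).
Proof. intros Hf Hc. exact (Hf _ (open_lt c (f t) Hc)). Qed.

Lemma ge_of_left_bound (f : R -> R) (a s c : R) :
  a < s -> continuous f s -> (forall u, a <= u < s -> c < f u) -> c <= f s.
Proof.
  intros Has Hf Hleft.
  apply (filterlim_le (F := at_left s) (fun _ => c) f c (f s)).
  - apply (locally_interval _ s a p_infty); simpl; [lra | exact I|].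
    intros u Hau _ Hus. left. apply Hleft. simpl in Hau. lra.
  - apply filterlim_const.
  - exact (filterlim_filter_le_1 f (fun P HP => filter_imp _ _ (fun u H _ => H) HP) Hf).
Qed.

Lemma derive_nonpos_of_left_min (f : R -> R) (a s l : R) :
  a < s -> is_derive f s l -> (forall u, a <= u < s -> f s <= f u) -> l <= 0.
Proof.
  intros Has Hd Hmin. apply is_derive_Reals in Hd.
  apply Rnot_lt_le; intro Hl.
  destruct (Hd l Hl) as [[d Hd0] Hq]; simpl in Hq.
  set (h := - Rmin (d / 2) (s - a)).
  assert (Hh : - d < h < 0 /\ a <= s + h).
  { pose proof (Rmin_l (d / 2) (s - a)). pose proof (Rmin_r (d / 2) (s - a)).
    assert (0 < Rmin (d / 2) (s - a)) by (apply Rmin_glb_lt; lra).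
    unfold h; lra. }
  specialize (Hq h ltac:(lra) ltac:(rewrite Rabs_left; lra)).
  apply Rabs_def2 in Hq.
  set (q := (f (s + h) - f s) / h) in Hq.
  assert (Hqh : q * h = f (s + h) - f s) by (unfold q; field; lra).
  specialize (Hmin (s + h) ltac:(lra)).
  nra.
Qed.

Lemma gt_at_first_contact (f : R -> R) (a s c l : R) :
  a < s -> is_derive f s l ->
  (forall u, a <= u < s -> c < f u) -> (f s = c -> 0 < l) -> c < f s.
Proof.
  intros Has Hd Hleft Hcross.
  pose proof (ge_of_left_bound f a s c Has (is_derive_continuous f s l Hd) Hleft)
    as Hge.
  destruct (Rle_lt_or_eq_dec _ _ Hge) as [Hlt|Heq]; [exact Hlt|].
  assert (l <= 0); [|specialize (Hcross (eq_sym Heq)); lra].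
  apply (derive_nonpos_of_left_min f a s l Has Hd).
  intros u Hu. rewrite <- Heq. left. apply Hleft, Hu.
Qed.

Lemma lt_at_first_contact (f : R -> R) (a s c l : R) :
  a < s -> is_derive f s l ->
  (forall u, a <= u < s -> f u < c) -> (f s = c -> l < 0) -> f s < c.
Proof.
  intros Has Hd Hleft Hcross.
  enough (- c < - f s) by lra.
  apply (gt_at_first_contact (fun u => - f u) a s (- c) (- l) Has).
  - exact (is_derive_opp f s l Hd).
  - intros u Hu. specialize (Hleft u Hu). lra.
  - intros Heq. specialize (Hcross ltac:(lra)). lra.
Qed.

Lemma linear_ode_solution (c f : R -> R) (a b : R) :
  a <= b ->
  (forall t, a <= t <= b -> continuous c t) ->
  (forall t, a <= t <= b -> is_derive f t (c t * f t)) ->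
  f b = f a * exp (RInt c a b).
Proof.
  intros Hab Hc Hf.
  (* [c] is extended continuously to all of R, so that [t |-> RInt g a t]
     is differentiable also at the end points. *)
  destruct (C0_extension_le c a b Hc) as [g [Hg Hgc]].
  set (I t := RInt g a t).
  assert (HI : forall t, is_derive I t (g t)).
  { intro t. apply (is_derive_RInt g I a); [|apply Hg].
    apply filter_forall; intro x. apply (RInt_correct g a x), ex_RInt_continuous.
    intros z _; apply Hg. }
  set (G t := f t * exp (- I t)).
  assert (HG : forall t, a <= t <= b -> is_derive G t 0).
  { intros t Ht.
    pose proof (is_derive_mult f (fun u => exp (- I u)) t _ _ (Hf t Ht)
      (is_derive_comp exp (fun u => - I u) t _ _ (is_derive_exp _)
        (is_derive_opp I t _ (HI t))) Rmult_comm) as H.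
    replace 0 with (plus (mult (c t * f t) (exp (- I t)))
                         (mult (f t) (scal (opp (g t)) (exp (- I t))))).
    - exact H.
    - rewrite Hgc by exact Ht.
      unfold plus, mult, scal, opp; simpl; unfold mult; simpl; ring. }
  assert (HGab : G b = G a).
  { pose proof (is_RInt_derive G (fun _ => 0) a b) as H.
    rewrite Rmin_left, Rmax_right in H by exact Hab.
    specialize (H HG (fun x _ => continuous_const 0 x)).
    apply is_RInt_unique in H. rewrite RInt_const in H.
    unfold scal, minus, plus, opp in H; simpl in H; unfold mult in H; simpl in H.
    lra. }
  assert (HIb : I b = RInt c a b).
  { apply RInt_ext. rewrite Rmin_left, Rmax_right by exact Hab.
    intros x Hx. apply Hgc. lra. }
  assert (HIa : I a = 0) by exact (RInt_point a g).
  unfold G in HGab. rewrite HIa, Ropp_0, exp_0, Rmult_1_r in HGab.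
  rewrite <- HIb, <- HGab, Rmult_assoc, <- exp_plus.
  replace (- I b + I b) with 0 by ring. rewrite exp_0. ring.
Qed.

Lemma exp_RInt_ge_1 (c : R -> R) (a b : R) :
  a <= b -> ex_RInt c a b -> (forall t, a < t < b -> 0 <= c t) ->
  1 <= exp (RInt c a b).
Proof.
  intros Hab Hex Hc.
  pose proof (RInt_ge_0 c a b Hab Hex Hc).
  pose proof (exp_ineq1_le (RInt c a b)). lra.
Qed.

Lemma exp_RInt_le_1 (c : R -> R) (a b : R) :
  a <= b -> ex_RInt c a b -> (forall t, a < t < b -> c t <= 0) ->
  exp (RInt c a b) <= 1.
Proof.
  intros Hab Hex Hc.
  assert (HI : RInt c a b <= 0).
  { assert (H0 : RInt (fun _ => 0) a b = 0).
    { rewrite RInt_const. unfold scal; simpl; unfold mult; simpl. ring. }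
    rewrite <- H0.
    apply RInt_le; [exact Hab | exact Hex | apply ex_RInt_const | exact Hc]. }
  rewrite <- exp_0.
  destruct (Rle_lt_or_eq_dec _ _ HI) as [Hlt|Heq].
  - left. apply exp_increasing, Hlt.
  - rewrite Heq. lra.
Qed.

Lemma coefA_pos (r : R -> R) (t : R) : 1 < r t -> 0 < coefA r t.
Proof.
  intros Hr. unfold coefA.
  assert (/ r t ^ 3 < 1)
    by (rewrite <- Rinv_1; apply Rinv_lt_contravar; simpl; nra).
  apply Rmult_lt_0_compat; [lra | apply sqrt_lt_R0; lra].
Qed.

Lemma coefB_pos (r : R -> R) (t : R) : 0 < r t -> 0 < coefB r t.
Proof.
  intros Hr. unfold coefB. apply Rdiv_lt_0_compat; [lra | apply sqrt_lt_R0; lra].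
Qed.

Lemma coef_ratio (r : R -> R) (t : R) :
  1 <= r t -> coefA r t ^ 2 / coefB r t ^ 2 = (1 - / r t ^ 3) / 3.
Proof.
  intros Hr. unfold coefA, coefB.
  assert (/ r t ^ 3 <= 1)
    by (rewrite <- Rinv_1; apply Rinv_le_contravar; simpl; nra).
  assert (Hs3 : 0 < sqrt 3) by (apply sqrt_lt_R0; lra).
  rewrite !Rpow_mult_distr, <- !Rsqr_pow2, Rsqr_div', !Rsqr_sqrt by lra.
  unfold Rsqr.
  replace (r t / sqrt 3 * (r t / sqrt 3)) with (r t * r t / (sqrt 3 * sqrt 3))
    by (field; lra).
  rewrite sqrt_sqrt by lra.
  field. lra.
Qed.

Lemma coef_ratio_lt_third (r : R -> R) (t : R) :
  1 < r t -> coefA r t ^ 2 / coefB r t ^ 2 < 1 / 3.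
Proof.
  intros Hr. rewrite coef_ratio by lra.
  assert (0 < / r t ^ 3) by (apply Rinv_0_lt_compat, pow_lt; lra). lra.
Qed.

Definition rate_minus (r fp : R -> R) (t : R) : R := 2 * (fp t - 1) / coefA r t.

Lemma rhs_minus_rate (r fp : R -> R) (t fm : R) :
  rhs_minus r t (fp t) fm = rate_minus r fp t * fm.
Proof. unfold rhs_minus, rate_minus, Rdiv. ring. Qed.

Lemma rhs_plus_at_one (r : R -> R) (t fm : R) :
  1 < r t -> rhs_plus r t 1 fm = (fm ^ 2 - 1) * (coefA r t / coefB r t ^ 2).
Proof.
  intros Hr. pose proof (coefA_pos r t Hr). pose proof (coefB_pos r t ltac:(lra)).
  unfold rhs_plus. field. lra.
Qed.

Lemma rhs_plus_at_two_thirds_pos (r : R -> R) (t fm : R) :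
  1 < r t -> 0 < rhs_plus r t (2 / 3) fm.
Proof.
  intros Hr. pose proof (coefA_pos r t Hr). pose proof (coefB_pos r t ltac:(lra)).
  pose proof (coef_ratio_lt_third r t Hr).
  assert (0 <= fm ^ 2 * (coefA r t / coefB r t ^ 2)).
  { apply Rmult_le_pos; [nra | left; apply Rdiv_lt_0_compat, pow_lt; lra]. }
  assert (0 < 2 / 3 / coefA r t * (1 - coefA r t ^ 2 / coefB r t ^ 2 - 2 / 3)).
  { apply Rmult_lt_0_compat; [apply Rdiv_lt_0_compat|]; lra. }
  unfold rhs_plus. lra.
Qed.

Section Invariance.

Variable r : R -> R.
Hypothesis r_gt_1 : forall t, 0 < t -> 1 < r t.
Hypothesis coefA_continuous : forall t, 0 < t -> continuous (coefA r) t.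

Lemma rate_minus_continuous (fp fm : R -> R) (t0 t1 t : R) :
  0 < t0 -> is_solution_on r fp fm t0 t1 -> t0 <= t <= t1 ->
  continuous (rate_minus r fp) t.
Proof.
  intros Ht0 Hsol Ht.
  assert (Hfp : continuity_pt fp t).
  { apply continuity_pt_filterlim, (is_derive_continuous fp t _ (proj1 (Hsol t Ht))). }
  apply continuity_pt_filterlim.
  apply (continuity_pt_div (fun u => 2 * (fp u - 1)) (coefA r)).
  - apply (continuity_pt_mult (fun _ => 2));
      [apply continuity_pt_const; intros ? ?; reflexivity|].
    apply (continuity_pt_minus fp);
      [exact Hfp | apply continuity_pt_const; intros ? ?; reflexivity].
  - apply continuity_pt_filterlim, coefA_continuous; lra.
  - apply Rgt_not_eq, coefA_pos, r_gt_1; lra.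
Qed.

Lemma ex_RInt_rate_minus (fp fm : R -> R) (t0 t1 s : R) :
  0 < t0 -> is_solution_on r fp fm t0 t1 -> t0 <= s <= t1 ->
  ex_RInt (rate_minus r fp) t0 s.
Proof.
  intros Ht0 Hsol Hs. apply (ex_RInt_continuous (V := R_CompleteNormedModule)).
  rewrite Rmin_left, Rmax_right by lra.
  intros z Hz. apply (rate_minus_continuous fp fm t0 t1 _ Ht0 Hsol); lra.
Qed.

Lemma fm_exp_formula (fp fm : R -> R) (t0 t1 s : R) :
  0 < t0 -> is_solution_on r fp fm t0 t1 -> t0 <= s <= t1 ->
  fm s = fm t0 * exp (RInt (rate_minus r fp) t0 s).
Proof.
  intros Ht0 Hsol Hs. apply linear_ode_solution; [lra| |].
  - intros t Ht. apply (rate_minus_continuous fp fm t0 t1 _ Ht0 Hsol); lra.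
  - intros t Ht. rewrite <- rhs_minus_rate. apply Hsol; lra.
Qed.

Lemma H_plus_invariant : fwd_invariant r H_plus.
Proof.
  intros fp fm t0 t1 Ht0 Ht01 Hsol Hfm0. unfold H_plus in *.
  rewrite (fm_exp_formula fp fm t0 t1 t1 Ht0 Hsol) by lra.
  apply Rmult_lt_0_compat; [exact Hfm0 | apply exp_pos].
Qed.

Lemma H_minus_invariant : fwd_invariant r H_minus.
Proof.
  intros fp fm t0 t1 Ht0 Ht01 Hsol Hfm0. unfold H_minus in *.
  rewrite (fm_exp_formula fp fm t0 t1 t1 Ht0 Hsol) by lra.
  pose proof (exp_pos (RInt (rate_minus r fp) t0 t1)). nra.
Qed.

Lemma R_infty_invariant : fwd_invariant r R_infty.
Proof.
  intros fp fm t0 t1 Ht0 Ht01 Hsol H0.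
  apply (real_induction (fun t => R_infty (fp t) (fm t)) t0 t1 Ht01 H0).
  - intros t Ht [Hfp Hfm]. destruct (Hsol t ltac:(lra)) as [Hdp Hdm].
    apply filter_and; apply locally_gt_of_continuous; try assumption;
      eapply is_derive_continuous; eassumption.
  - intros s Hs Hbefore.
    assert (Hfm : 1 < fm s).
    { rewrite (fm_exp_formula fp fm t0 t1 s Ht0 Hsol) by lra.
      assert (1 <= exp (RInt (rate_minus r fp) t0 s)).
      { apply exp_RInt_ge_1;
          [lra | apply (ex_RInt_rate_minus fp fm t0 t1 _ Ht0 Hsol); lra |].
        intros u Hu. destruct (Hbefore u ltac:(lra)) as [Hfpu _].
        pose proof (coefA_pos r u (r_gt_1 u ltac:(lra))).
        unfold rate_minus. apply Rdiv_le_0_compat; lra. }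
      destruct H0. nra. }
    split; [|exact Hfm].
    apply (gt_at_first_contact fp t0 s 1 (rhs_plus r s (fp s) (fm s)));
      [lra | apply Hsol; lra | intros u Hu; apply Hbefore, Hu |].
    intros Heq. pose proof (r_gt_1 s ltac:(lra)) as Hrs.
    rewrite Heq, rhs_plus_at_one by exact Hrs.
    pose proof (coefA_pos r s Hrs). pose proof (coefB_pos r s ltac:(lra)).
    apply Rmult_lt_0_compat; [nra | apply Rdiv_lt_0_compat, pow_lt; lra].
Qed.

Lemma R_zero_invariant : fwd_invariant r R_zero.
Proof.
  intros fp fm t0 t1 Ht0 Ht01 Hsol H0.
  apply (real_induction (fun t => R_zero (fp t) (fm t)) t0 t1 Ht01 H0).
  - intros t Ht [[Hfp1 Hfp2] [Hfm1 Hfm2]].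
    destruct (Hsol t ltac:(lra)) as [Hdp Hdm].
    pose proof (is_derive_continuous _ _ _ Hdp).
    pose proof (is_derive_continuous _ _ _ Hdm).
    repeat apply filter_and;
      first [apply locally_gt_of_continuous | apply locally_lt_of_continuous]; assumption.
  - intros s Hs Hbefore. pose proof (r_gt_1 s ltac:(lra)) as Hrs.
    assert (Hfm : 0 < fm s < 1).
    { rewrite (fm_exp_formula fp fm t0 t1 s Ht0 Hsol) by lra.
      assert (exp (RInt (rate_minus r fp) t0 s) <= 1).
      { apply exp_RInt_le_1;
          [lra | apply (ex_RInt_rate_minus fp fm t0 t1 _ Ht0 Hsol); lra |].
        intros u Hu. destruct (Hbefore u ltac:(lra)) as [[_ Hfpu] _].
        pose proof (coefA_pos r u (r_gt_1 u ltac:(lra))) as HAu.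
        unfold rate_minus, Rdiv. pose proof (Rinv_0_lt_compat _ HAu). nra. }
      pose proof (exp_pos (RInt (rate_minus r fp) t0 s)).
      destruct H0 as [_ [Hfm0 Hfm1]]. split; nra. }
    split; [|exact Hfm]. split.
    + apply (gt_at_first_contact fp t0 s (2 / 3) (rhs_plus r s (fp s) (fm s)));
        [lra | apply Hsol; lra | intros u Hu; apply Hbefore, Hu |].
      intros Heq. rewrite Heq. apply rhs_plus_at_two_thirds_pos, Hrs.
    + apply (lt_at_first_contact fp t0 s 1 (rhs_plus r s (fp s) (fm s)));
        [lra | apply Hsol; lra | intros u Hu; apply Hbefore, Hu |].
      intros Heq. rewrite Heq, rhs_plus_at_one by exact Hrs.
      pose proof (coefA_pos r s Hrs). pose proof (coefB_pos r s ltac:(lra)).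
      assert (0 < coefA r s / coefB r s ^ 2) by (apply Rdiv_lt_0_compat, pow_lt; lra).
      assert (fm s ^ 2 < 1) by (destruct Hfm; nra).
      nra.
Qed.

End Invariance.

Theorem mainTheorem3 (r : R -> R) :
  (forall t, 0 < t -> 1 < r t) ->
  filterlim r (at_right 0) (locally 1) ->
  (forall t, 0 < t ->
     is_derive (coefA r) t (1 / 2 * (1 - coefA r t ^ 2 / coefB r t ^ 2))) ->
  (forall t, 0 < t -> is_derive (coefB r) t (coefA r t / coefB r t)) ->
  fwd_invariant r H_plus /\ fwd_invariant r H_minus /\
  fwd_invariant r R_infty /\ fwd_invariant r R_zero.
Proof.
  intros Hr _ HA _.
  assert (HAc : forall t, 0 < t -> continuous (coefA r) t)
    by (intros t Ht; exact (is_derive_continuous _ _ _ (HA t Ht))).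
  split; [|split; [|split]].
  - exact (H_plus_invariant r Hr HAc).
  - exact (H_minus_invariant r Hr HAc).
  - exact (R_infty_invariant r Hr HAc).
  - exact (R_zero_invariant r Hr HAc).
Qed.
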